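(* Let $K\le P$ be positive integers, $\theta=(K,P)$, and $n\ge 3$. Then $\mathbb{E}[\chi_{123}(\theta)]=\beta(\theta)$, and consequently $\mathbb{E}[T_n(\theta)]=\binom{n}{3}\beta(\theta)$.
   Context: Random key graph: fix positive integers $K\le P$ and write $\theta=(K,P)$. For $n\ge 3$, let $K_1(\theta),\dots,K_n(\theta)$ be i.i.d. random subsets of $\{1,\dots,P\}$, each uniformly distributed over the $\binom{P}{K}$ subsets of size $K$. The random key graph $\mathbb{K}(n;\theta)$ on vertex set $\{1,\dots,n\}$ has an edge between distinct $i,j$ iff $K_i(\theta)\cap K_j(\theta)\neq\emptyset$. Define $q(\theta)=\binom{P-K}{K}/\binom{P}{K}$ if $2K\le P$ and $q(\theta)=0$ if $P<2K$ (so $q(\theta)$ is the probability that two given nodes are not adjacent); $p(\theta)=1-q(\theta)$; $r(\theta)=\binom{P-2K}{K}/\binom{P}{K}$ if $3K\le P$ and $r(\theta)=0$ if $P<3K$; $\beta(\theta)=(1-q(\theta))^3+q(\theta)^3-q(\theta)r(\theta)$. For distinct $i,j,k$, $\chi_{ijk}(\theta)$ is the indicator that nodes $i,j,k$ form a triangle in $\mathbb{K}(n;\theta)$, and $T_n(\theta)=\sum_{1\le i<j<k\le n}\chi_{ijk}(\theta)$ is the number of triangles. *)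

From HB Require Import structures.
From mathcomp Require Import all_boot all_order all_algebra.
Set Implicit Arguments. Unset Strict Implicit. Unset Printing Implicit Defensive.
Import Order.TTheory GRing.Theory Num.Theory.
Local Open Scope ring_scope.

(* A key assignment: node i : 'I_n gets a key ring ks i, a subset of the key
   pool 'I_P (which stands for {1,...,P}). *)
Definition keyassign (n P : nat) := {ffun 'I_n -> {set 'I_P}}.

(* Sample space: all assignments where every key ring has exactly K keys.
   Uniform measure on it = i.i.d. uniform K-subsets. *)
Definition keyspace (n P K : nat) : {set keyassign n P} :=
  [set ks : keyassign n P | [forall i, #|ks i| == K]].

Definition expect (n P K : nat) (X : keyassign n P -> rat) : rat :=
  (\sum_(ks in keyspace n P K) X ks) / (#|keyspace n P K|)%:R.

Definition adj (n P : nat) (ks : keyassign n P) (i j : 'I_n) : bool :=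
  (i != j) && (ks i :&: ks j != set0).

Definition chi (n P : nat) (ks : keyassign n P) (i j k : 'I_n) : rat :=
  (adj ks i j && adj ks j k && adj ks i k)%:R.

Definition Tn (n P : nat) (ks : keyassign n P) : rat :=
  \sum_(i < n) \sum_(j < n | (i < j)%N) \sum_(k < n | (j < k)%N) chi ks i j k.

Definition qth (K P : nat) : rat :=
  if (2 * K <= P)%N then ('C(P - K, K))%:R / ('C(P, K))%:R else 0.
Definition pth (K P : nat) : rat := 1 - qth K P.
Definition rth (K P : nat) : rat :=
  if (3 * K <= P)%N then ('C(P - 2 * K, K))%:R / ('C(P, K))%:R else 0.
Definition betath (K P : nat) : rat :=
  (1 - qth K P) ^+ 3 + qth K P ^+ 3 - qth K P * rth K P.
Arguments chi {n P} ks i j k.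
Arguments Tn {n P} ks.
Arguments expect n P K X : clear implicits.

(* Proof idea: chi_{ijk} depends only on the three key rings of i, j, k,
   which are independent uniform K-subsets, so its expectation is the
   proportion of triples (A, B, C) of K-subsets that pairwise intersect.
   With N = C(P,K), D = C(P-K,K), E = C(P-2K,K): a K-set avoids a given
   K-set in D ways and two disjoint K-sets in E ways.  Fixing A and
   counting C by inclusion-exclusion separately for B meeting A or not
   gives N((N-D)(N-2D) + D^2 - DE) = (N-D)^3 + D^3 - NDE such triples,
   i.e. N^3 beta.  Linearity over the C(n,3) triples then gives E[T_n]. *)

From HB Require Import structures.
From mathcomp Require Import all_boot all_order all_algebra.
From mathcomp Require Import zify ring.
Set Implicit Arguments. Unset Strict Implicit. Unset Printing Implicit Defensive.
Import Order.TTheory GRing.Theory Num.Theory.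

Lemma sum_bin_nat_tail m d k :
  \sum_(m <= i < m + d) 'C(m + d - i.+1, k) = 'C(d, k.+1).
Proof.
elim: d => [|d IHd]; first by rewrite addn0 big_geq.
rewrite addnS big_nat_recl ?leq_addr //.
under eq_bigr do rewrite subSS.
by rewrite IHd subSS addKn addnC binS.
Qed.

Lemma sum_bin_ord_gt n m k :
  \sum_(i < n | m < i) 'C(n - i.+1, k) = 'C(n - m.+1, k.+1).
Proof.
rewrite -[LHS](big_geq_mkord m.+1 n xpredT (fun i => 'C(n - i.+1, k))).
have [lt_mn | le_nm] := ltnP m n; last first.
  by rewrite big_geq ?leqW //; move/leqW: le_nm; rewrite -subn_eq0 => /eqP ->.
by rewrite -{1 2}(subnKC lt_mn) sum_bin_nat_tail.
Qed.

Local Open Scope ring_scope.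

Lemma sum_ord_triples (V : nmodType) n (x : V) :
  \sum_(i < n) \sum_(j < n | (i < j)%N) \sum_(k < n | (j < k)%N) x = x *+ 'C(n, 3).
Proof.
have sum_gt m l :
    \sum_(i < n | (m < i)%N) x *+ 'C(n - i.+1, l) = x *+ 'C(n - m.+1, l.+1).
  by rewrite sumrMnr sum_bin_ord_gt.
have sum_const m : \sum_(i < n | (m < i)%N) x = x *+ 'C(n - m.+1, 1).
  by rewrite -sum_gt; apply: eq_bigr => i _; rewrite bin0.
under eq_bigr => i _ do under eq_bigr => j _ do rewrite sum_const.
under eq_bigr => i _ do rewrite sum_gt.
rewrite sumrMnr -(big_mkord xpredT (fun i => 'C(n - i.+1, 2))).
by rewrite -{1 2}[n]add0n sum_bin_nat_tail.
Qed.

Section ThreeCoordinates.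

Variables (I T : finType) (D : {set T}) (i0 i1 i2 : I).
Hypotheses (ne01 : i0 != i1) (ne02 : i0 != i2) (ne12 : i1 != i2).

Lemma card_coords3 : #|[set i0; i1; i2]| = 3%N.
Proof. by rewrite setUC !cardsU1 cards1 !inE negb_or !(eq_sym i2) ne02 ne12 ne01. Qed.

Lemma card_coords3C : #|~: [set i0; i1; i2]| = (#|I| - 3)%N.
Proof. by rewrite cardsCs setCK card_coords3. Qed.

Lemma card_ffun_on_coords3 (a b c : T) : a \in D -> b \in D -> c \in D ->
  #|[pred f : {ffun I -> T} | (f \in ffun_on D) && ((f i0, f i1, f i2) == (a, b, c))]|
  = (#|D| ^ (#|I| - 3))%N.
Proof.
move=> Da Db Dc.
pose F i := [pred x | if i == i0 then x == a else if i == i1 then x == b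
                      else if i == i2 then x == c else x \in D].
transitivity #|family F|.
  apply: eq_card => f; rewrite !inE.
  apply/andP/familyP => [[/ffun_onP fD] | Ff].
    move=> /eqP[fa fb fc] i; rewrite inE.
    by do ![case: eqP => [->|_]]; rewrite ?fa ?fb ?fc ?eqxx ?fD.
  have := Ff i0; have := Ff i1; have := Ff i2.
  rewrite !inE !eqxx (eq_sym i1 i0) (eq_sym i2 i0) (eq_sym i2 i1).
  rewrite (negbTE ne01) (negbTE ne02) (negbTE ne12).
  move=> /eqP fc /eqP fb /eqP fa; rewrite fa fb fc eqxx; split=> //.
  apply/ffun_onP => i; have := Ff i; rewrite inE.
  by do ![case: eqP => [->|_]]; rewrite ?fa ?fb ?fc => // /eqP->.
rewrite card_family foldrE big_map big_enum /= (bigID (mem [set i0; i1; i2])) /=.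
rewrite big1 ?mul1n => [|i]; last first.
  rewrite !inE => /orP[/orP[]|] /eqP->; apply: eq_card1 => x;
  by rewrite !inE !eqxx 1?(eq_sym i1 i0) 1?(eq_sym i2 i0) 1?(eq_sym i2 i1)
     ?(negbTE ne01) ?(negbTE ne02) ?(negbTE ne12).
rewrite -card_coords3C -prod_nat_const; apply: eq_big => i; rewrite !inE //.
by rewrite !negb_or => /andP[/andP[/negbTE-> /negbTE->] /negbTE->]; apply: eq_card => x.
Qed.

Lemma sum_ffun_on_coords3 (V : nmodType) (g : T -> T -> T -> V) :
  \sum_(f in ffun_on D) g (f i0) (f i1) (f i2)
  = (\sum_(a in D) \sum_(b in D) \sum_(c in D) g a b c) *+ (#|D| ^ (#|I| - 3))%N.
Proof.
rewrite (partition_big (fun f : {ffun I -> T} => (f i0, f i1, f i2))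
      [pred y | (y.1.1 \in D) && (y.1.2 \in D) && (y.2 \in D)]) => [|f /ffun_onP fD];
  last by rewrite /= !fD.
rewrite [in RHS]pair_big_dep [in RHS]pair_big_dep -sumrMnl.
apply: eq_big => -[[a b] c] //= /andP[/andP[Da Db] Dc].
rewrite -(card_ffun_on_coords3 Da Db Dc) -sumr_const.
by apply: eq_big => [f|f /andP[_ /eqP[-> -> ->]]].
Qed.

End ThreeCoordinates.
Lemma card_draws_disjoint (T : finType) (Y : {set T}) k :
  #|[set X : {set T} | (#|X| == k) && [disjoint Y & X]]| = 'C(#|T| - #|Y|, k).
Proof.
have -> : (#|T| - #|Y| = #|~: Y|)%N by rewrite [RHS]cardsCs setCK.
rewrite -cards_draws.
by apply: eq_card => X; rewrite !inE disjoint_sym disjoints_subset andbC.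
Qed.

Definition pairwise_meet (T : finType) (A B C : {set T}) : bool :=
  (A :&: B != set0) && (B :&: C != set0) && (A :&: C != set0).

Section TriangleCount.

Variables (R : comNzRingType) (T : finType) (K : nat).

Local Notation ksets := [set X : {set T} | #|X| == K].
Local Notation N := ('C(#|T|, K)%:R : R).
Local Notation D := ('C(#|T| - K, K)%:R : R).
Local Notation E := ('C(#|T| - 2 * K, K)%:R : R).

Let disj (X Y : {set T}) : R := ([disjoint X & Y] : nat)%:R.

Lemma sum_ksets_const (x : R) : \sum_(X in ksets) x = N * x.
Proof. by rewrite sumr_const card_draws mulr_natl. Qed.

Lemma sum_disj_ksets (Y : {set T}) :
  \sum_(X in ksets) disj Y X = 'C(#|T| - #|Y|, K)%:R.
Proof.
rewrite -natr_sum -card_draws_disjoint -sum1dep_card big_mkcondr /=.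
by congr _%:R; apply: eq_big => [X|X _]; rewrite ?inE // ; case: [disjoint _ & _].
Qed.

Lemma disj_mulr (A B X : {set T}) : disj A X * disj B X = disj (A :|: B) X.
Proof.
rewrite /disj -natrM mulnb -disjointU.
by congr (nat_of_bool _)%:R; apply: eq_disjoint => x; rewrite !inE.
Qed.

Lemma sum_disj2_ksets (A B : {set T}) : [disjoint A & B] ->
  \sum_(X in ksets) disj A X * disj B X = 'C(#|T| - (#|A| + #|B|), K)%:R.
Proof.
move=> dAB; under eq_bigr do rewrite disj_mulr.
by rewrite sum_disj_ksets cardsU (disjoint_setI0 dAB) cards0 subn0.
Qed.

Lemma sum_pairwise_meet_ksets2 (A B : {set T}) : #|A| = K -> #|B| = K ->
  \sum_(C in ksets) (pairwise_meet A B C : nat)%:R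
  = (1 - disj A B) * (N - D *+ 2 + \sum_(C in ksets) disj A C * disj B C).
Proof.
move=> cA cB.
have indicator C : (pairwise_meet A B C : nat)%:R
    = (1 - disj A B) * (1 - disj B C - disj A C + disj A C * disj B C).
  rewrite /pairwise_meet /disj !setI_eq0.
  by case: [disjoint A & B]; case: [disjoint B & C]; case: [disjoint A & C] => /=; ring.
under eq_bigr do rewrite indicator.
rewrite -mulr_sumr !big_split /= !sumrN sum_ksets_const mulr1 !sum_disj_ksets cA cB.
by congr (_ * _); ring.
Qed.

Lemma sum_pairwise_meet_ksets1 (A : {set T}) : #|A| = K ->
  \sum_(B in ksets) \sum_(C in ksets) (pairwise_meet A B C : nat)%:R
  = (N - D) * (N - D *+ 2) + D ^+ 2 - D * E.
Proof.
move=> cA.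
pose G B := \sum_(C in ksets) disj A C * disj B C.
have disjG (B : {set T}) : #|B| = K -> disj A B * G B = disj A B * E.
  move=> cB; rewrite /disj; have [dAB|_] := boolP [disjoint A & B];
    last by rewrite !mul0r.
  by rewrite /G sum_disj2_ksets // cA cB addnn -mul2n.
have sumG : \sum_(B in ksets) G B = D ^+ 2.
  rewrite /G exchange_big /= (eq_bigr (fun C => disj A C * D)) => [|C]; last first.
    rewrite inE => /eqP cC; rewrite -mulr_sumr; congr (_ * _).
    transitivity (\sum_(B in ksets) disj C B); last by rewrite sum_disj_ksets cC.
    by apply: eq_bigr => B _; rewrite /disj disjoint_sym.
  by rewrite -mulr_suml sum_disj_ksets cA expr2.
rewrite (eq_bigr (fun B => (1 - disj A B) * (N - D *+ 2) + G B - disj A B * E))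
  => [|B]; last first.
  rewrite inE => /eqP cB; rewrite sum_pairwise_meet_ksets2 // -/(G B) -(disjG B cB); ring.
rewrite !big_split /= sumrN sumG -!mulr_suml sumrB sum_ksets_const mulr1.
by rewrite sum_disj_ksets cA; ring.
Qed.

Lemma sum_pairwise_meet_ksets :
  \sum_(A in ksets) \sum_(B in ksets) \sum_(C in ksets) (pairwise_meet A B C : nat)%:R
  = (N - D) ^+ 3 + D ^+ 3 - N * D * E.
Proof.
rewrite (eq_bigr (fun=> (N - D) * (N - D *+ 2) + D ^+ 2 - D * E)) => [|A]; last first.
  by rewrite inE => /eqP; apply: sum_pairwise_meet_ksets1.
by rewrite sum_ksets_const; ring.
Qed.

End TriangleCount.

Lemma qthE K P : qth K P = 'C(P - K, K)%:R / 'C(P, K)%:R.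
Proof. by rewrite /qth; case: leqP => // ltP2K; rewrite bin_small ?mul0r //; lia. Qed.

Lemma rthE K P : rth K P = 'C(P - 2 * K, K)%:R / 'C(P, K)%:R.
Proof. by rewrite /rth; case: leqP => // ltP3K; rewrite bin_small ?mul0r //; lia. Qed.

Lemma betath_count K P : (K <= P)%N ->
  let N : rat := 'C(P, K)%:R in
  let D : rat := 'C(P - K, K)%:R in
  let E : rat := 'C(P - 2 * K, K)%:R in
  betath K P = ((N - D) ^+ 3 + D ^+ 3 - N * D * E) / N ^+ 3.
Proof.
move=> leKP N D E; have N_neq0 : N != 0 by rewrite pnatr_eq0 -lt0n bin_gt0.
by rewrite /betath qthE rthE -/N -/D -/E; field.
Qed.

Lemma keyspaceE n P K :
  keyspace n P K =i ffun_on [set X : {set 'I_P} | #|X| == K].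
Proof.
by move=> ks; rewrite inE; apply/forallP/ffun_onP => ksK i; have := ksK i; rewrite inE.
Qed.

Lemma card_keyspace n P K : #|keyspace n P K| = ('C(P, K) ^ n)%N.
Proof. by rewrite (eq_card (@keyspaceE n P K)) card_ffun_on card_draws !card_ord. Qed.

Lemma sum_keyspace_chi n P K (i j k : 'I_n) : i != j -> i != k -> j != k ->
  let N : rat := 'C(P, K)%:R in
  let D : rat := 'C(P - K, K)%:R in
  let E : rat := 'C(P - 2 * K, K)%:R in
  \sum_(ks in keyspace n P K) chi ks i j k
  = ((N - D) ^+ 3 + D ^+ 3 - N * D * E) *+ ('C(P, K) ^ (n - 3))%N.
Proof.
move=> ij ik jk N D E; rewrite (eq_bigl _ _ (@keyspaceE n P K)).
rewrite (eq_bigr (fun ks : keyassign n P => (pairwise_meet (ks i) (ks j) (ks k) : nat)%:R))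
  => [|ks _]; last by rewrite /chi /adj ij ik jk.
by rewrite (sum_ffun_on_coords3 _ ij ik jk (fun A B C => (pairwise_meet A B C : nat)%:R))
  sum_pairwise_meet_ksets card_draws !card_ord.
Qed.

Lemma expect_chi n P K (i j k : 'I_n) : (K <= P)%N -> i != j -> i != k -> j != k ->
  expect n P K (fun ks => chi ks i j k) = betath K P.
Proof.
move=> leKP ij ik jk.
have le3n : (3 <= n)%N.
  by rewrite -[n in (_ <= n)%N]card_ord -(card_coords3 ij ik jk) max_card.
have N_neq0 : 'C(P, K)%:R != 0 :> rat by rewrite pnatr_eq0 -lt0n bin_gt0.
rewrite /expect sum_keyspace_chi // card_keyspace betath_count // -mulr_natr !natrX.
rewrite -[in X in _ / X](subnK le3n) exprD.
by field; rewrite N_neq0 expf_neq0.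
Qed.

Lemma expect_sum n P K (I : Type) (r : seq I) (p : pred I)
    (X : I -> keyassign n P -> rat) :
  expect n P K (fun ks => \sum_(i <- r | p i) X i ks)
  = \sum_(i <- r | p i) expect n P K (X i).
Proof. by rewrite /expect exchange_big mulr_suml. Qed.

Theorem proposition1 (K P n : nat) (hK : (0 < K)%N) (hKP : (K <= P)%N)
    (hn : (3 <= n)%N) :
  expect n P K (fun ks => chi ks (Ordinal (leq_trans (isT : (0 < 3)%N) hn))
                               (Ordinal (leq_trans (isT : (1 < 3)%N) hn))
                               (Ordinal (leq_trans (isT : (2 < 3)%N) hn)))
    = betath K P
  /\ expect n P K (fun ks => Tn ks) = ('C(n, 3))%:R * betath K P.
Proof.
have expect_chi_lt (i j k : 'I_n) : (i < j)%N -> (j < k)%N ->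
    expect n P K (fun ks => chi ks i j k) = betath K P.
  move=> ij jk; have ik := ltn_trans ij jk.
  by apply: expect_chi; rewrite // -val_eqE neq_ltn ?ij ?jk ?ik.
split; first exact: expect_chi_lt.
rewrite /Tn expect_sum.
under eq_bigr => i _ do rewrite expect_sum.
under eq_bigr => i _ do under eq_bigr => j _ do rewrite expect_sum.
under eq_bigr => i _ do under eq_bigr => j ij do
  under eq_bigr => k jk do rewrite expect_chi_lt //.
by rewrite sum_ord_triples mulr_natl.
Qed.
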